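(* If $\mathfrak R$ is the Sierpiński gasket iterated graph system, then for all $m\in\mathbb N$ and $i,j\in\{0,1,2\}$, \[ d_{G_m}(i^m,j^m)\le 2^m-1. \] If $\mathfrak R$ is the pentagonal Sierpiński carpet iterated graph system, then for all $m\in\mathbb N$ and $i,j\in\{0,1,2,3,4\}$, \[ d_{G_m}(i^m,j^m)\le 2^{m+1}-1. \] Here $i^m\in W_m$ denotes the word consisting of the symbol $i$ repeated $m$ times.
   Context: Graphs: $(V,E)$, $V$ finite non-empty, $E\subseteq V\times V$, $(x,y)\in E\Rightarrow(y,x)\notin E$; $d_G$ is the shortest-path metric in the underlying undirected graph. An iterated graph system consists of a connected graph $G_1=(S,E)$, a finite set $\mathcal T$ of types, a surjective typing $\mathfrak t:E\to\mathcal T$ and non-empty gluing rules $I_t\subseteq S\times S$. With $W_m=S^m$, $[w]_k=w_1\cdots w_k$, the replacement graphs $G_m=(W_m,E_m)$ are defined recursively: $(w,v)\in E_{m+1}$ iff either (1) $[w]_m=[v]_m$ and $(w_{m+1},v_{m+1})\in E$ (type $\mathfrak t(w_{m+1},v_{m+1})$), or (2) $([w]_m,[v]_m)\in E_m$ and $(w_{m+1},v_{m+1})\in I_{\mathfrak t([w]_m,[v]_m)}$ (type $\mathfrak t([w]_m,[v]_m)$). Sierpiński gasket: $S=\{0,1,2\}$, $E=\{(0,1),(1,2),(0,2)\}$ of types $a,b,c$ respectively, $I_a=\{(1,0)\}$, $I_b=\{(2,1)\}$, $I_c=\{(2,0)\}$. Pentagonal Sierpiński carpet: $S=\{0,1,2,3,4\}$,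 $E=\{(0,1),(1,2),(2,3),(3,4),(4,0)\}$ of types $a,b,c,d,e$ respectively, $I_a=\{(1,0),(2,4)\}$, $I_b=\{(2,1),(3,0)\}$, $I_c=\{(3,2),(4,1)\}$, $I_d=\{(4,3),(0,2)\}$, $I_e=\{(0,4),(1,3)\}$. *)

From mathcomp Require Import all_boot.
Set Implicit Arguments. Unset Strict Implicit. Unset Printing Implicit Defensive.

(* S : alphabet (vertex set of G_1), T : types.
   typE a b = Some t  iff (a,b) is an edge of G_1 of type t; None otherwise.
   glue t : the gluing rule I_t, as a boolean relation on S.
   Words w in W_m = S^m are sequences of length m, w = w_1 ... w_m. *)
Section IGS.
Variables (S T : eqType) (typE : S -> S -> option T) (glue : T -> rel S).

(* Type of the (directed) edge (w,v) of G_m, given the REVERSED words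
   rw = rev w, rv = rev v (so the head is the last letter w_m).
   Some t iff (w,v) in E_m with type t.  The base case (empty words) is the
   one-vertex graph G_0 without edges, from which rule (1) yields exactly
   G_1 = (S,E) with its typing; for m+1 the two rules of the paper:
   (1) [w]_m = [v]_m and (w_{m+1},v_{m+1}) in E, type t(w_{m+1},v_{m+1});
   (2) ([w]_m,[v]_m) in E_m of type t and (w_{m+1},v_{m+1}) in I_t, type t. *)
Fixpoint etype_rev (rw rv : seq S) : option T :=
  match rw, rv with
  | a :: rw', b :: rv' =>
      match (if rw' == rv' then typE a b else None) with
      | Some t => Some t
      | None =>
          match etype_rev rw' rv' with
          | Some t => if glue t a b then Some t else None
          | None => None
          end
      end
  | _, _ => None
  end.

Definition etype (w v : seq S) : option T := etype_rev (rev w) (rev v).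

Definition igs_edge (m : nat) (w v : seq S) : bool :=
  [&& size w == m, size v == m & etype w v != None].

Definition igs_adj (m : nat) : rel (seq S) :=
  fun w v => igs_edge m w v || igs_edge m v w.

(* d_{G_m}(x,y) <= k : there is a path in the underlying undirected graph
   of G_m from x to y with at most k edges. *)
Definition igs_dist_le (m : nat) (x y : seq S) (k : nat) : Prop :=
  exists p : seq (seq S),
    [/\ path (igs_adj m) x p, last x p = y & size p <= k].

End IGS.

(* Sierpinski gasket: S = {0,1,2}, types a,b,c encoded as 0,1,2. *)
Definition gasket_typ (x y : 'I_3) : option nat :=
  match val x, val y with
  | 0, 1 => Some 0
  | 1, 2 => Some 1
  | 0, 2 => Some 2
  | _, _ => None
  end.

Definition gasket_glue (t : nat) (x y : 'I_3) : bool :=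
  match t with
  | 0 => (val x == 1) && (val y == 0)
  | 1 => (val x == 2) && (val y == 1)
  | 2 => (val x == 2) && (val y == 0)
  | _ => false
  end.

(* Pentagonal Sierpinski carpet: S = {0,...,4}, types a..e encoded as 0..4. *)
Definition pent_typ (x y : 'I_5) : option nat :=
  match val x, val y with
  | 0, 1 => Some 0
  | 1, 2 => Some 1
  | 2, 3 => Some 2
  | 3, 4 => Some 3
  | 4, 0 => Some 4
  | _, _ => None
  end.

Definition pent_glue (t : nat) (x y : 'I_5) : bool :=
  let p := (val x, val y) in
  match t with
  | 0 => (p == (1, 0)) || (p == (2, 4))
  | 1 => (p == (2, 1)) || (p == (3, 0))
  | 2 => (p == (3, 2)) || (p == (4, 1))
  | 3 => (p == (4, 3)) || (p == (0, 2))
  | 4 => (p == (0, 4)) || (p == (1, 3))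
  | _ => false
  end.

(* If (i, j) is an edge of G_1 of type t with (j, i) in I_t, then the words
   i j^m and j i^m are adjacent in G_(m+1), and prefixing a letter maps paths
   of G_m to paths of G_(m+1).  Walking from i i^m to i j^m, across to j i^m and
   on to j j^m gives d_(m+1) <= 2 d_m + 1, hence d_m(i^m, j^m) <= 2^m - 1.  In
   the gasket every pair of distinct letters is such an edge in some order; in
   the pentagonal carpet only cyclically consecutive letters are, but any two
   letters have a common neighbour, which doubles the bound. *)
From mathcomp Require Import all_boot zify.
Set Implicit Arguments. Unset Strict Implicit. Unset Printing Implicit Defensive.

Section IteratedGraphSystem.
Variables (S T : eqType) (typE : S -> S -> option T) (glue : T -> rel S).
Hypothesis typE_irrefl : forall a, typE a a = None.

Local Notation adj := (igs_adj typE glue).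
Local Notation dist_le := (igs_dist_le typE glue).

Lemma etype_rev_rcons a rw rv : size rw = size rv ->
  etype_rev typE glue (rcons rw a) (rcons rv a) = etype_rev typE glue rw rv.
Proof.
elim: rw rv => [|b rw IH] [|c rv] //=; first by rewrite typE_irrefl.
by case=> eq_size; rewrite eqseq_rcons eqxx andbT IH.
Qed.

Lemma igs_adj_cons m a w v : adj m w v -> adj m.+1 (a :: w) (a :: v).
Proof.
rewrite /igs_adj /igs_edge /etype /= !rev_cons !eqSS.
case/orP => /and3P[/eqP w_size /eqP v_size e_wv]; apply/orP; [left | right];
  by rewrite w_size v_size !eqxx etype_rev_rcons ?size_rev ?w_size ?v_size.
Qed.

Lemma igs_dist_le_cons m a x y k :
  dist_le m x y k -> dist_le m.+1 (a :: x) (a :: y) k.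
Proof.
case=> p [xp <- size_p]; exists (map (cons a) p); split.
- by elim: p x xp {size_p} => //= z p IH x /andP[/(igs_adj_cons a) -> /IH].
- by rewrite last_map.
- by rewrite size_map.
Qed.

Lemma igs_dist_le_refl m x : dist_le m x x 0.
Proof. by exists [::]. Qed.

Lemma igs_dist_le_adj m x y : adj m x y -> dist_le m x y 1.
Proof. by move=> xy; exists [:: y]; rewrite /= xy. Qed.

Lemma igs_dist_le_trans m x y z k1 k2 :
  dist_le m x y k1 -> dist_le m y z k2 -> dist_le m x z (k1 + k2).
Proof.
case=> p1 [xp1 <- size_p1] [p2 [yp2 <- size_p2]]; exists (p1 ++ p2); split.
- by rewrite cat_path xp1 yp2.
- by rewrite last_cat.
- by rewrite size_cat leq_add.
Qed.

Lemma igs_dist_leW m x y k k' : dist_le m x y k -> k <= k' -> dist_le m x y k'.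
Proof.
by case=> p [xp last_p size_p] le_kk'; exists p; rewrite (leq_trans size_p).
Qed.

Definition glued_edge (i j : S) : bool :=
  if typE i j is Some t then glue t j i else false.

Definition linked (i j : S) : bool := glued_edge i j || glued_edge j i.

Lemma etype_glued_edge m i j t : typE i j = Some t -> glue t j i ->
  etype typE glue (i :: nseq m j) (j :: nseq m i) = Some t.
Proof.
move=> e_ij g_ji; have neq_ij : i != j.
  by apply/eqP => eq_ij; move: e_ij; rewrite eq_ij typE_irrefl.
rewrite /etype !rev_cons !rev_nseq.
elim: m => [|m IH] /=; first by rewrite e_ij.
by rewrite eqseq_rcons (negbTE neq_ij) andbF IH g_ji.
Qed.

Lemma igs_adj_linked m i j :
  linked i j -> adj m.+1 (i :: nseq m j) (j :: nseq m i).
Proof.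
have edge a b : glued_edge a b -> igs_edge typE glue m.+1 (a :: nseq m b) (b :: nseq m a).
  rewrite /glued_edge /igs_edge /= !size_nseq eqxx.
  by case e_ab: (typE a b) => [t|] // g_ba; rewrite (etype_glued_edge _ e_ab).
by case/orP => [/edge | /edge]; rewrite /igs_adj => ->; rewrite ?orbT.
Qed.

Lemma igs_dist_le_linked m i j :
  linked i j -> dist_le m (nseq m i) (nseq m j) (2 ^ m - 1).
Proof.
move=> ij; elim: m => [|m IH]; first exact: igs_dist_le_refl.
have -> : 2 ^ m.+1 - 1 = (2 ^ m - 1) + 1 + (2 ^ m - 1).
  by rewrite expnS; have := expn_gt0 2 m; lia.
apply: igs_dist_le_trans (igs_dist_le_cons j IH).
apply: igs_dist_le_trans (igs_dist_le_cons i IH) _.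
exact/igs_dist_le_adj/igs_adj_linked.
Qed.

Lemma igs_dist_le_nseq m i j :
  (i == j) || linked i j -> dist_le m (nseq m i) (nseq m j) (2 ^ m - 1).
Proof.
case/orP => [/eqP -> | /igs_dist_le_linked //].
exact: igs_dist_leW (igs_dist_le_refl _ _) _.
Qed.

End IteratedGraphSystem.

Lemma gasket_typ_irrefl (a : 'I_3) : gasket_typ a a = None.
Proof. by case: a => [[|[|[|//]]] ?]. Qed.

Lemma pent_typ_irrefl (a : 'I_5) : pent_typ a a = None.
Proof. by case: a => [[|[|[|[|[|//]]]]] ?]. Qed.

Lemma gasket_linked (i j : 'I_3) : (i == j) || linked gasket_typ gasket_glue i j.
Proof. by move: i j; do 2!case=> [[|[|[|//]]] ?]. Qed.

Lemma pent_linked_diam2 (i j : 'I_5) : exists k : 'I_5,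
  ((i == k) || linked pent_typ pent_glue i k) &&
  ((k == j) || linked pent_typ pent_glue k j).
Proof.
move: i j; do 2!case=> [[|[|[|[|[|//]]]]] ?];
  by [exists ord0 | exists (Ordinal (isT : 1 < 5)) | exists (Ordinal (isT : 2 < 5))
     | exists (Ordinal (isT : 3 < 5)) | exists ord_max].
Qed.

Theorem lemma5p18 :
  (forall (m : nat) (i j : 'I_3), 1 <= m ->
     igs_dist_le gasket_typ gasket_glue m (nseq m i) (nseq m j) (2 ^ m - 1))
  /\
  (forall (m : nat) (i j : 'I_5), 1 <= m ->
     igs_dist_le pent_typ pent_glue m (nseq m i) (nseq m j) (2 ^ m.+1 - 1)).
Proof.
split=> m i j _.
  exact/igs_dist_le_nseq/gasket_linked/gasket_typ_irrefl.
have [k /andP[ik kj]] := pent_linked_diam2 i j.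
have le_sum : (2 ^ m - 1) + (2 ^ m - 1) <= 2 ^ m.+1 - 1.
  by rewrite expnS; have := expn_gt0 2 m; lia.
exact: igs_dist_leW (igs_dist_le_trans (igs_dist_le_nseq pent_typ_irrefl m ik)
                                       (igs_dist_le_nseq pent_typ_irrefl m kj)) le_sum.
Qed.
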